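(* Let $\mu_1,\mu_2,\beta>0$, $p>2$, $c_1,c_2>0$ with $c_1+c_2<4^{\frac{p-2}{2p-3}}\big[\frac{p(p-2)^{p-2}}{K_{2p}\mu_0(p-1)^p}\big]^{\frac1{2p-3}}$, $\mu_0=\max\{\mu_1+\beta,\mu_2+\beta\}$. Then $\tilde m:=\inf_{\mathcal A(c_1,c_2)}I>-\infty$.
   Context: $E:=\{u\in H^1(\mathbb{R}^2):\int\log(1+|x|^2)u^2dx<\infty\}$; $S(c):=\{w\in E:\int w^2dx=c\}$. $Q(u)=\int|\nabla u|^2$, $I(u,v)=\frac12(Q(u)+Q(v))+\frac14\iint\log|x-y|(u^2(x)+v^2(x))(u^2(y)+v^2(y))dxdy-\frac1{2p}\big(\mu_1\int|u|^{2p}+\mu_2\int|v|^{2p}+2\beta\int|uv|^p\big)$. $\mathcal A(c_1,c_2)=\{(u,v)\in S(c_1)\times S(c_2):Q(u)+Q(v)<\frac{p-1}{p-2}\frac{(c_1+c_2)^2}4\}$. $K_{2p}$ is the best constant in $\|u\|_{2p}^{2p}\le K_{2p}\|\nabla u\|_2^{2p-2}\|u\|_2^2$ on $H^1(\mathbb{R}^2)$. *)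

(* R^2 is modelled as R * R with the product
   Lebesgue measure; functions are real-valued (the paper's u, v are real). *)
From mathcomp Require Import all_boot all_algebra all_classical all_reals all_analysis.
Import GRing.Theory Num.Theory numFieldNormedType.Exports.
Local Open Scope classical_set_scope.
Local Open Scope ring_scope.
Local Open Scope ereal_scope.

Section Defs.
Context {R : realType}.

Definition leb2 := ((@lebesgue_measure R) \x (@lebesgue_measure R))%E.
Definition leb4 := (leb2 \x leb2)%E.

Definition e1 : R * R := (1%R, 0%R).
Definition e2 : R * R := (0%R, 1%R).

Definition sqnorm2 (x : R * R) : R := (x.1 ^+ 2 + x.2 ^+ 2)%R.

Definition Dseq (s : seq (R * R)) (f : R * R -> R) : R * R -> R :=
  foldr (fun v g => fun x => 'D_v g x) f s.

Definition test_fun (phi : R * R -> R) : Prop :=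
  (forall (s : seq (R * R)) (x v : R * R), derivable (Dseq s phi) x v) /\
  (forall (s : seq (R * R)) (x : R * R), {for x, continuous (Dseq s phi)}) /\
  (exists r : R, forall x, (r < sqnorm2 x)%R -> phi x = 0%R).

Definition L2 (u : R * R -> R) : Prop :=
  measurable_fun setT u /\ \int[leb2]_x ((u x) ^+ 2)%:E < +oo.

Definition weak_grad (u g1 g2 : R * R -> R) : Prop :=
  forall phi, test_fun phi ->
    \int[leb2]_x (u x * 'D_e1 phi x)%:E = - (\int[leb2]_x (g1 x * phi x)%:E) /\
    \int[leb2]_x (u x * 'D_e2 phi x)%:E = - (\int[leb2]_x (g2 x * phi x)%:E).

Definition H1_with (u g1 g2 : R * R -> R) : Prop :=
  L2 u /\ L2 g1 /\ L2 g2 /\ weak_grad u g1 g2.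

Definition E_with (u g1 g2 : R * R -> R) : Prop :=
  H1_with u g1 g2 /\
  \int[leb2]_x (ln (1 + sqnorm2 x) * (u x) ^+ 2)%:E < +oo.

Definition Qg (g1 g2 : R * R -> R) : \bar R :=
  \int[leb2]_x ((g1 x) ^+ 2 + (g2 x) ^+ 2)%:E.

Definition mass (w : R * R -> R) : \bar R := \int[leb2]_x ((w x) ^+ 2)%:E.

Definition Lq (q : R) (w : R * R -> R) : \bar R :=
  \int[leb2]_x (`|w x| `^ q)%:E.

Definition logdist (x y : R * R) : R :=
  ln (Num.sqrt ((x.1 - y.1) ^+ 2 + (x.2 - y.2) ^+ 2)).

Definition Ifun (mu1 mu2 beta p : R) (u gu1 gu2 v gv1 gv2 : R * R -> R) : \bar R :=
  (2^-1)%:E * (Qg gu1 gu2 + Qg gv1 gv2)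
  + (4^-1)%:E * \int[leb4]_z
      (logdist z.1 z.2 * ((u z.1) ^+ 2 + (v z.1) ^+ 2)
                        * ((u z.2) ^+ 2 + (v z.2) ^+ 2))%:E
  - ((2 * p)^-1)%:E *
      (mu1%:E * Lq (2 * p) u + mu2%:E * Lq (2 * p) v
       + (2 * beta)%:E * \int[leb2]_x (`|u x * v x| `^ p)%:E).

Definition GN_ineq (p K : R) : Prop :=
  forall u g1 g2, H1_with u g1 g2 ->
    Lq (2 * p) u <= (K * (fine (Qg g1 g2)) `^ (p - 1) * fine (mass u))%:E.
Definition best_GN_const (p K : R) : Prop :=
  GN_ineq p K /\ forall K', GN_ineq p K' -> (K <= K')%R.

Definition I_on_A (mu1 mu2 beta p c1 c2 : R) : set \bar R :=
  [set z | exists u gu1 gu2 v gv1 gv2,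
     E_with u gu1 gu2 /\ E_with v gv1 gv2 /\
     mass u = c1%:E /\ mass v = c2%:E /\
     Qg gu1 gu2 + Qg gv1 gv2 <
       ((p - 1) / (p - 2) * (c1 + c2) ^+ 2 / 4)%:E /\
     z = Ifun mu1 mu2 beta p u gu1 gu2 v gv1 gv2].

End Defs.

From HB Require Import structures.
From mathcomp Require Import all_boot all_algebra all_classical all_reals all_analysis.
From mathcomp Require Import order ring lra measurable_realfun.
Import GRing.Theory Num.Theory numFieldNormedType.Exports Order.TTheory.
Local Open Scope ring_scope.

(* On A(c1,c2) both Dirichlet energies are below Qm := (p-1)/(p-2) (c1+c2)^2/4,
   so the Gagliardo-Nirenberg inequality bounds int |u|^2p and int |v|^2p, and
   with them the power nonlinearity (|uv|^p <= |u|^2p + |v|^2p).  The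
   logarithmic term is negative only near the diagonal: with rho = u^2 + v^2
   and the strips S_n = {(x, y) : |x - y|_oo < 2^-n},
     (log |x - y|)^- rho(x) rho(y) <= sum_n 1_(S_n)(x, y) (rho(x)^2 + rho(y)^2),
   and by Tonelli the right-hand side integrates to at most 16 int rho^2,
   which is bounded since rho^2 <= 2 (u^2 + |u|^2p) + 2 (v^2 + |v|^2p). *)

Local Notation T2 R := (measurableTypeR R * measurableTypeR R)%type.
Local Notation T4 R := (T2 R * T2 R)%type.

Section integral_nonmeasurable.
Local Open Scope ereal_scope.
Context {d} {T : measurableType d} {R : realType}.
Variable mu : {measure set T -> \bar R}.

(* Unlike [ge0_le_integral], no measurability is needed: the integral of a
   nonnegative function is the supremum over the simple functions below it. *)
Lemma ge0_le_integral_nonmeas (f g : T -> \bar R) :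
  (forall x, 0 <= f x) -> (forall x, f x <= g x) ->
  \int[mu]_x f x <= \int[mu]_x g x.
Proof.
move=> f0 fg; have g0 x : 0 <= g x by apply: le_trans (fg x).
rewrite !ge0_integralTE//; apply: ereal_sup_le => _ [h /= hf <-].
by exists h => //= x; exact: le_trans (hf x) (fg x).
Qed.

End integral_nonmeasurable.

Section dyadic.
Context {R : realType}.

Definition dyad (n : nat) : R := ((2 ^ n)%:R)^-1.

Lemma dyad_gt0 n : 0 < dyad n.
Proof. by rewrite /dyad invr_gt0 ltr0n expn_gt0. Qed.

Lemma dyad_le1 n : dyad n <= 1.
Proof. by rewrite /dyad invf_le1 ?ler1n ?expn_gt0 // ltr0n expn_gt0. Qed.

Lemma ln_dyad n : ln (dyad n) = - (ln 2 *+ n).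
Proof. by rewrite /dyad lnV ?posrE ?ltr0n ?expn_gt0// natrX lnXn. Qed.

Lemma exists_dyad_le (s : R) : 0 < s -> exists n, dyad n <= s.
Proof.
move=> s0; set m := (Num.truncn s^-1).+1; exists m.
have m_le_2m : (m%:R <= (2 ^ m)%:R :> R) by rewrite ler_nat ltnW // ltn_expl.
have invs_lt : s^-1 < (2 ^ m)%:R by apply: lt_le_trans (truncnS_gt _) m_le_2m.
rewrite /dyad -[s]invrK lef_pV2 ?posrE ?invr_gt0 ?ltr0n ?expn_gt0 //.
exact: ltW.
Qed.

(* N is the first index with 2^-N <= s; then -ln s <= N ln 2 <= N. *)
Lemma neg_ln_le_dyad_count (s : R) : 0 < s ->
  exists N : nat, - ln s <= N%:R /\ forall n, (n < N)%N -> s < dyad n.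
Proof.
move=> s0; have [N sN Nmin] := ex_minnP (exists_dyad_le s s0).
exists N; split; last first.
  by move=> n nN; rewrite ltNge; apply/negP => /Nmin; rewrite leqNgt nN.
have : ln (dyad N) <= ln s by rewrite ler_ln ?posrE ?dyad_gt0.
rewrite ln_dyad -[ln 2 *+ N]mulr_natr => lnN.
have ln2_le1 : ln (2 : R) <= 1.
  by have := expR_ge1Dx (ln (2 : R)); rewrite lnK ?posrE//; lra.
have : 0 <= (1 - ln 2) * N%:R :> R by rewrite mulr_ge0 // subr_ge0.
lra.
Qed.

End dyadic.

Section boxes.
Context {R : realType}.
Local Open Scope classical_set_scope.

Definition box (c : R * R) (r : R) : set (R * R) :=
  `](c.1 - r), (c.1 + r)[ `*` `](c.2 - r), (c.2 + r)[.

Lemma boxE c r y : box c r y <-> `|c.1 - y.1| < r /\ `|c.2 - y.2| < r.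
Proof. by rewrite /box /= !in_itv /= -!ltr_distlC. Qed.

Lemma box_sym c r y : box c r y <-> box y r c.
Proof. by rewrite !boxE !(distrC c.1) !(distrC c.2). Qed.

Lemma measurable_box c r : measurable (box c r : set (T2 R)).
Proof. by apply: measurableX; exact: measurable_itv. Qed.

Lemma leb2X (A B : set R) : measurable A -> measurable B ->
  leb2 (A `*` B) = (lebesgue_measure A * lebesgue_measure B)%E.
Proof. by move=> mA mB; rewrite /leb2; exact: product_measure1E. Qed.

Lemma leb2_box c r : 0 < r -> leb2 (box c r) = ((2 * r) ^+ 2)%:E.
Proof.
move=> r0; rewrite /box leb2X ?measurable_itv//.
rewrite !lebesgue_measure_itv /= !lte_fin !ltrD2l !gtrN //.
by rewrite -!EFinB -EFinM; congr (_%:E); ring.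
Qed.

Lemma sigma_finite_leb2 : sigma_finite setT (@leb2 R).
Proof.
exists (fun n => box 0 n.+1%:R).
  apply/seteqP; split => // y _; exists (Num.truncn (`|y.1| + `|y.2|)) => //.
  have := truncnS_gt (`|y.1| + `|y.2|); rewrite boxE !sub0r !normrN.
  by have := normr_ge0 y.1; have := normr_ge0 y.2; lra.
by move=> n; split; [exact: measurable_box | rewrite leb2_box ?ltry].
Qed.

End boxes.

HB.instance Definition _ (R : realType) := Measure.on (@leb2 R).
HB.instance Definition _ (R : realType) :=
  Measure_isSigmaFinite.Build _ _ _ (@leb2 R) sigma_finite_leb2.

Section near_diagonal.
Context {R : realType}.
Local Open Scope classical_set_scope.

Definition near_diag (n : nat) : set ((R * R) * (R * R)) :=
  [set z | box z.1 (dyad n) z.2].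

Lemma indic_near_diagE n x y :
  (\1_(near_diag n) (x, y) : R) = \1_(box x (dyad n)) y.
Proof. by rewrite !indicE. Qed.

Lemma indic_near_diagE_sym n x y :
  (\1_(near_diag n) (x, y) : R) = \1_(box y (dyad n)) x.
Proof.
rewrite !indicE; suff -> : ((x, y) \in near_diag n) = (x \in box y (dyad n)) by [].
by apply/idP/idP; rewrite !inE /near_diag /= => /box_sym.
Qed.

Lemma measurable_near_diag n : measurable (near_diag n : set (T4 R)).
Proof.
have mcoord (f : T4 R -> T2 R) (g : T2 R -> measurableTypeR R) :
    measurable_fun setT f -> measurable_fun setT g ->
    measurable_fun setT (fun z => g (f z) : R).
  by move=> mf mg; exact: measurableT_comp mg mf.
have mdist (i j : T4 R -> R) : measurable_fun setT i -> measurable_fun setT j ->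
    measurable (setT `&` (fun z => `|i z - j z|) @^-1` `]-oo, dyad n[).
  move=> mi mj.
  have mij := measurableT_comp (@normr_measurable R setT) (measurable_funB mi mj).
  exact: mij measurableT _ (measurable_itv _).
have -> : (near_diag n : set (T4 R)) =
    (setT `&` (fun z => `|z.1.1 - z.2.1|) @^-1` `]-oo, dyad n[) `&`
    (setT `&` (fun z => `|z.1.2 - z.2.2|) @^-1` `]-oo, dyad n[).
  apply/seteqP; split => z; rewrite /near_diag /= boxE /= !in_itv /=.
    by move=> [? ?].
  by move=> [[_ ?] [_ ?]].
apply: measurableI; apply: mdist; apply: mcoord.
all: first [exact: measurable_fst | exact: measurable_snd].
Qed.

Lemma logdist_neg_le_near_diag (x y : R * R) (a b : R) : 0 <= a -> 0 <= b ->
  (- (logdist x y * a * b)%:E <=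
   \sum_(n <oo) ((\1_(near_diag n) (x, y) : R) * (a ^+ 2 + b ^+ 2))%:E)%E.
Proof.
move=> a0 b0.
set t := fun n => ((\1_(near_diag n) (x, y) : R) * (a ^+ 2 + b ^+ 2))%:E.
have t0 n : (0 <= t n)%E by rewrite lee_fin mulr_ge0 ?addr_ge0 ?sqr_ge0 // indicE.
rewrite /logdist; set s := Num.sqrt _.
have [ls0 | ls0] := leP 0 (ln s).
  apply: le_trans (nneseries_ge0 (fun n _ _ => t0 n)).
  by rewrite leeNl oppe0 lee_fin !mulr_ge0.
have s0 : 0 < s.
  rewrite lt_neqAle sqrtr_ge0 andbT; apply/eqP => s0.
  by move: ls0; rewrite -s0 ln0 ?ltxx.
have [N [lnN sN]] := neg_ln_le_dyad_count s s0.
have d1 : `|x.1 - y.1| <= s.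
  by rewrite -sqrtr_sqr ler_sqrt ?addr_ge0 ?sqr_ge0 // lerDl sqr_ge0.
have d2 : `|x.2 - y.2| <= s.
  by rewrite -sqrtr_sqr ler_sqrt ?addr_ge0 ?sqr_ge0 // lerDr sqr_ge0.
have tN n : (n < N)%N -> t n = (a ^+ 2 + b ^+ 2)%:E.
  move=> nN; rewrite /t indicE mem_set ?mul1r //; apply/boxE.
  by split; [apply: le_lt_trans d1 _ | apply: le_lt_trans d2 _]; exact: sN.
apply: le_trans (nneseries_lim_ge N (fun n _ _ => t0 n)).
rewrite (eq_big_nat _ _ (F2 := fun=> (a ^+ 2 + b ^+ 2)%:E)) /=; last exact: tN.
rewrite sumEFin sumr_const_nat subn0 lee_fin -mulr_natr.
have : 0 <= (N%:R + ln s) * (a * b) by rewrite mulr_ge0 ?mulr_ge0 // -lerBlDr sub0r.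
have : 0 <= N%:R * (a ^+ 2 + b ^+ 2 - a * b) :> R.
  by rewrite mulr_ge0 // -(subrK (a * b) (a ^+ 2)) -addrA; nra.
nra.
Qed.

Local Open Scope ereal_scope.

Lemma integral_indic_box (c : R * R) (r : R) : (0 < r)%R ->
  \int[leb2]_y (\1_(box c r) y)%:E = ((2 * r) ^+ 2)%:E.
Proof.
move=> r0; rewrite (integral_indic _ measurableT (measurable_box c r)) setIT.
exact: leb2_box.
Qed.

Lemma integral_near_diag_fst n (w : R * R -> R) :
  measurable_fun (setT : set (T2 R)) w -> (forall x, 0 <= w x)%R ->
  \int[leb4]_z ((\1_(near_diag n) z : R) * w z.1)%:E =
  \int[leb2]_x (w x)%:E * ((2 * dyad n) ^+ 2)%:E.
Proof.
move=> mw w0; rewrite /leb4 fubini_tonelli1 /=; last 2 first.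
- apply/measurable_EFinP; apply: measurable_funM.
    exact: measurable_indic (measurable_near_diag n).
  exact: measurableT_comp mw measurable_fst.
- by move=> z; rewrite lee_fin mulr_ge0 ?w0 // indicE.
rewrite -ge0_integralZr //; last 3 first.
- exact/measurable_EFinP.
- by move=> x _; rewrite lee_fin.
- by rewrite lee_fin sqr_ge0.
apply: eq_integral => x _; rewrite /fubini_F.
under eq_integral => y _ do rewrite indic_near_diagE /= mulrC EFinM.
rewrite ge0_integralZl_EFin ?integral_indic_box ?dyad_gt0 //.
by apply/measurable_EFinP; apply: measurable_indic; exact: measurable_box.
Qed.

Lemma integral_near_diag_snd n (w : R * R -> R) :
  measurable_fun (setT : set (T2 R)) w -> (forall x, 0 <= w x)%R ->
  \int[leb4]_z ((\1_(near_diag n) z : R) * w z.2)%:E =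
  \int[leb2]_x (w x)%:E * ((2 * dyad n) ^+ 2)%:E.
Proof.
move=> mw w0; rewrite /leb4 fubini_tonelli2 /=; last 2 first.
- apply/measurable_EFinP; apply: measurable_funM.
    exact: measurable_indic (measurable_near_diag n).
  exact: measurableT_comp mw measurable_snd.
- by move=> z; rewrite lee_fin mulr_ge0 ?w0 // indicE.
rewrite -ge0_integralZr //; last 3 first.
- exact/measurable_EFinP.
- by move=> x _; rewrite lee_fin.
- by rewrite lee_fin sqr_ge0.
apply: eq_integral => y _; rewrite /fubini_G.
under eq_integral => x _ do rewrite indic_near_diagE_sym /= mulrC EFinM.
rewrite ge0_integralZl_EFin ?integral_indic_box ?dyad_gt0 //.
by apply/measurable_EFinP; apply: measurable_indic; exact: measurable_box.
Qed.

End near_diagonal.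

Section log_energy.
Context {R : realType}.
Local Open Scope ereal_scope.

Lemma integral_near_diag_le n (w : R * R -> R) (P : R) :
  measurable_fun (setT : set (T2 R)) w -> (forall x, 0 <= w x)%R ->
  \int[leb2]_x (w x)%:E <= P%:E ->
  \int[leb4]_z ((\1_(near_diag n) z : R) * (w z.1 + w z.2))%:E <=
  (8 * P * dyad n ^+ 2)%:E.
Proof.
move=> mw w0 wP; have mS := measurable_near_diag (R := R) n.
under eq_integral => z _ do rewrite mulrDr EFinD.
rewrite ge0_integralD //; first last.
- apply/measurable_EFinP; apply: measurable_funM; first exact: measurable_indic.
  exact: measurableT_comp mw measurable_snd.
- by move=> z _; rewrite lee_fin mulr_ge0 ?w0 // indicE.
- apply/measurable_EFinP; apply: measurable_funM; first exact: measurable_indic.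
  exact: measurableT_comp mw measurable_fst.
- by move=> z _; rewrite lee_fin mulr_ge0 ?w0 // indicE.
rewrite integral_near_diag_fst // integral_near_diag_snd //.
have -> : (8 * P * dyad n ^+ 2 = P * (2 * dyad n) ^+ 2 + P * (2 * dyad n) ^+ 2)%R.
  by ring.
rewrite EFinD; apply: leeD; rewrite (EFinM P).
all: by apply: lee_wpmul2r; rewrite ?lee_fin ?sqr_ge0.
Qed.

Lemma log_energy_ge (rho : R * R -> R) (P : R) :
  measurable_fun (setT : set (T2 R)) rho -> (forall x, 0 <= rho x)%R ->
  \int[leb2]_x (rho x ^+ 2)%:E <= P%:E ->
  (- (16 * P))%:E <= \int[leb4]_z (logdist z.1 z.2 * rho z.1 * rho z.2)%:E.
Proof.
move=> mrho rho0 rhoP.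
have mw : measurable_fun setT (fun x => rho x ^+ 2)%R := measurable_funX 2 mrho.
have P0 : (0 <= P)%R.
  rewrite -lee_fin; apply: le_trans rhoP.
  by apply: integral_ge0 => x _; rewrite lee_fin sqr_ge0.
pose g n (z : T4 R) := ((\1_(near_diag n) z : R) * (rho z.1 ^+ 2 + rho z.2 ^+ 2))%:E.
have g0 n z : 0 <= g n z by rewrite lee_fin mulr_ge0 ?addr_ge0 ?sqr_ge0 // indicE.
have mg n : measurable_fun setT (g n).
  apply/measurable_EFinP; apply: measurable_funM.
    exact: measurable_indic (measurable_near_diag n).
  by apply: measurable_funD; apply: measurableT_comp mw _;
    [exact: measurable_fst | exact: measurable_snd].
rewrite integralE EFinN -sub0e; apply: leeB.
  by apply: integral_ge0 => z _; exact: funepos_ge0.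
apply: le_trans (ge0_le_integral_nonmeas leb4 _ (fun z => \sum_(n <oo) g n z) _ _) _.
- by move=> z; exact: funeneg_ge0.
- case=> x y; rewrite funenegE ge_max logdist_neg_le_near_diag //=.
  exact: nneseries_ge0.
rewrite integral_nneseries //.
apply: le_trans (lee_nneseries (v := fun k => (16 * P / (2 ^ (k + 1))%:R)%:E) _ _) _.
- by move=> n _ _; exact: integral_ge0.
- (* 8 P 4^-n <= 16 P 2^-(n+1), a geometric series summing to 16 P *)
  move=> n _.
  apply: le_trans (integral_near_diag_le n _ _ mw (fun x => sqr_ge0 _) rhoP) _.
  have d0 := @dyad_gt0 R n; have d1 := @dyad_le1 R n.
  have -> : (16 * P / (2 ^ (n + 1))%:R = 8 * P * dyad n)%R.
    by rewrite /dyad addn1 expnS natrM invfM; field.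
  rewrite lee_fin; have : (0 <= P * dyad n * (1 - dyad n))%R.
    by rewrite !mulr_ge0 ?subr_ge0 // ltW.
  nra.
have := @cvg_geometric_eseries_half R (16 * P) 0.
by rewrite expr0 divr1 => /cvg_lim ->.
Qed.

End log_energy.

Section power_bounds.
Context {R : realType}.

Lemma sqr_sqr_le_powR (a p : R) : 2 <= p -> (a ^+ 2) ^+ 2 <= a ^+ 2 + `|a| `^ (2 * p).
Proof.
move=> p2; have := powR_ge0 `|a| (2 * p); have := sqr_ge0 a.
have [a1|a1] := leP `|a| 1.
  have : a ^+ 2 <= 1 by rewrite -(real_normK (num_real a)); exact: exprn_ile1.
  nra.
have : `|a| `^ 4%:R <= `|a| `^ (2 * p) by apply: ler_powR; [exact: ltW | lra].
by rewrite powR_mulrn // (_ : 4%N = (2 * 2)%N) // exprM real_normK ?num_real; lra.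
Qed.

Lemma powR_normM_le (a b p : R) : `|a * b| `^ p <= `|a| `^ (2 * p) + `|b| `^ (2 * p).
Proof.
have sqr_powR (x : R) : `|x| `^ (2 * p) = (`|x| `^ p) ^+ 2.
  by rewrite mulrC powRrM powR_mulrn ?powR_ge0.
rewrite normrM powRM // !sqr_powR.
have := powR_ge0 `|a| p; have := powR_ge0 `|b| p.
have := sqr_ge0 (`|a| `^ p - `|b| `^ p); nra.
Qed.

End power_bounds.

Section integral_bounds.
Context {R : realType}.
Local Open Scope ereal_scope.
Implicit Types (u v f g : R * R -> R).

Lemma measurable_powR_norm u (q : R) : measurable_fun (setT : set (T2 R)) u ->
  measurable_fun (setT : set (T2 R)) (fun x => `|u x| `^ q)%R.
Proof.
move=> mu; apply: (measurableT_comp (measurable_powR q)).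
exact: measurableT_comp (@normr_measurable R setT) mu.
Qed.

Lemma integralD_ge0 f g :
  measurable_fun (setT : set (T2 R)) f -> measurable_fun (setT : set (T2 R)) g ->
  (forall x, 0 <= f x)%R -> (forall x, 0 <= g x)%R ->
  \int[leb2]_x (f x + g x)%:E = \int[leb2]_x (f x)%:E + \int[leb2]_x (g x)%:E.
Proof.
move=> mf mg f0 g0; under eq_integral do rewrite EFinD.
rewrite ge0_integralD //.
- by move=> x _; rewrite lee_fin.
- exact/measurable_EFinP.
- by move=> x _; rewrite lee_fin.
- exact/measurable_EFinP.
Qed.

Lemma integral_sqr_sum_sqr_le u v (p : R) : (2 <= p)%R ->
  measurable_fun (setT : set (T2 R)) u -> measurable_fun (setT : set (T2 R)) v ->
  \int[leb2]_x ((u x ^+ 2 + v x ^+ 2) ^+ 2)%:E <=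
  2%:E * (mass u + Lq (2 * p) u) + 2%:E * (mass v + Lq (2 * p) v).
Proof.
move=> p2 mu mv.
pose bound (w : R * R -> R) (x : R * R) := (w x ^+ 2 + `|w x| `^ (2 * p))%R.
have bound0 (w : R * R -> R) x : (0 <= bound w x)%R.
  by rewrite addr_ge0 ?sqr_ge0 ?powR_ge0.
have mbound (w : R * R -> R) : measurable_fun (setT : set (T2 R)) w ->
    measurable_fun (setT : set (T2 R)) (bound w).
  move=> mw; apply: measurable_funD; first exact: measurable_funX.
  exact: measurable_powR_norm.
have intZ2 (w : R * R -> R) : measurable_fun (setT : set (T2 R)) w ->
    \int[leb2]_x (2 * bound w x)%:E = 2%:E * \int[leb2]_x (bound w x)%:E.
  move=> mw; under eq_integral do rewrite EFinM.
  rewrite ge0_integralZl_EFin // => [x _|]; first by rewrite lee_fin.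
  by apply/measurable_EFinP; exact: mbound.
apply: le_trans (ge0_le_integral_nonmeas leb2 _
  (fun x => (2 * bound u x + 2 * bound v x)%:E) _ _) _.
- by move=> x; rewrite lee_fin sqr_ge0.
- move=> x; rewrite lee_fin /bound.
  have := sqr_sqr_le_powR (u x) p p2; have := sqr_sqr_le_powR (v x) p p2.
  have := sqr_ge0 (u x ^+ 2 - v x ^+ 2); lra.
rewrite integralD_ge0 ?intZ2 ?integralD_ge0 //.
all: try by move=> x; rewrite sqr_ge0.
all: try by move=> x; rewrite mulr_ge0 ?bound0.
all: try exact: measurable_funX.
all: try exact: measurable_powR_norm.
all: by apply: measurable_funM; [exact: measurable_cst | exact: mbound].
Qed.

Lemma integral_powR_mul_le u v (p : R) :
  measurable_fun (setT : set (T2 R)) u -> measurable_fun (setT : set (T2 R)) v ->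
  \int[leb2]_x (`|u x * v x| `^ p)%:E <= Lq (2 * p) u + Lq (2 * p) v.
Proof.
move=> mu mv; rewrite /Lq -integralD_ge0 //; last 2 first.
- exact: measurable_powR_norm.
- exact: measurable_powR_norm.
by apply: ge0_le_integral_nonmeas => x; rewrite lee_fin ?powR_ge0 ?powR_normM_le.
Qed.

Lemma Qg_ge0 (g1 g2 : R * R -> R) : 0 <= Qg g1 g2.
Proof. by apply: integral_ge0 => x _; rewrite lee_fin addr_ge0 ?sqr_ge0. Qed.

End integral_bounds.

Section energy_bound.
Context {R : realType}.
Local Open Scope ereal_scope.
Implicit Types (u v : R * R -> R).

Lemma Lq_le_GN {p K c Qm : R} {u g1 g2 : R * R -> R} : (1 <= p)%R -> GN_ineq p K ->
  H1_with u g1 g2 -> mass u = c%:E -> Qg g1 g2 <= Qm%:E ->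
  Lq (2 * p) u <= (`|K| * Qm `^ (p - 1) * c)%:E.
Proof.
move=> p1 GN H1 uc QQm; apply: le_trans (GN _ _ _ H1) _; rewrite uc lee_fin.
have c0 : (0 <= c)%R.
  by rewrite -lee_fin -uc; apply: integral_ge0 => x _; rewrite lee_fin sqr_ge0.
have Q0 := Qg_ge0 g1 g2.
have Qfin : Qg g1 g2 \is a fin_num.
  by rewrite ge0_fin_numE //; apply: le_lt_trans QQm (ltry _).
have fQ0 : (0 <= fine (Qg g1 g2))%R by exact: fine_ge0.
have fQQm : (fine (Qg g1 g2) <= Qm)%R by rewrite -lee_fin fineK.
rewrite -!mulrA; apply: le_trans (ler_norm _) _.
rewrite normrM ler_wpM2l // ger0_norm ?mulr_ge0 ?powR_ge0 // ler_wpM2r //.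
by apply: ge0_ler_powR; rewrite ?nnegrE ?subr_ge0 //; exact: le_trans fQQm.
Qed.

Lemma Ifun_lower_bound (mu1 mu2 beta p c1 c2 L1 L2 : R) u (gu1 gu2 : R * R -> R)
    v (gv1 gv2 : R * R -> R) :
  (0 <= mu1)%R -> (0 <= mu2)%R -> (0 <= beta)%R -> (2 <= p)%R ->
  measurable_fun (setT : set (T2 R)) u -> measurable_fun (setT : set (T2 R)) v ->
  mass u = c1%:E -> mass v = c2%:E ->
  Lq (2 * p) u <= L1%:E -> Lq (2 * p) v <= L2%:E ->
  (- (8 * (c1 + L1 + c2 + L2)) -
     (2 * p)^-1 * (mu1 * L1 + mu2 * L2 + 2 * beta * (L1 + L2)))%:E <=
  Ifun mu1 mu2 beta p u gu1 gu2 v gv1 gv2.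
Proof.
move=> mu10 mu20 beta0 p2 mu mv uc1 vc2 uL1 vL2.
have uvL : \int[leb2]_x (`|u x * v x| `^ p)%:E <= (L1 + L2)%:E.
  by apply: le_trans (integral_powR_mul_le u v p mu mv) _; rewrite EFinD leeD.
have rhoP : \int[leb2]_x ((u x ^+ 2 + v x ^+ 2) ^+ 2)%:E <=
            (2 * (c1 + L1) + 2 * (c2 + L2))%:E.
  apply: le_trans (integral_sqr_sum_sqr_le u v p p2 mu mv) _.
  rewrite uc1 vc2 !(EFinD, EFinM).
  by apply: leeD; apply: lee_wpmul2l; rewrite ?lee_fin // leeD.
have kinetic : 0 <= (2^-1)%:E * (Qg gu1 gu2 + Qg gv1 gv2).
  by apply: mule_ge0; [rewrite lee_fin | exact: adde_ge0 (Qg_ge0 _ _) (Qg_ge0 _ _)].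
have log_term : (- (8 * (c1 + L1 + c2 + L2)))%:E <=
    (4^-1)%:E * \int[leb4]_z (logdist z.1 z.2 * (u z.1 ^+ 2 + v z.1 ^+ 2)
                                              * (u z.2 ^+ 2 + v z.2 ^+ 2))%:E.
  have rho0 x : (0 <= u x ^+ 2 + v x ^+ 2)%R by rewrite addr_ge0 ?sqr_ge0.
  have mrho : measurable_fun (setT : set (T2 R)) (fun x => u x ^+ 2 + v x ^+ 2)%R.
    by apply: measurable_funD; exact: measurable_funX.
  apply: le_trans (lee_wpmul2l _ (log_energy_ge _ _ mrho rho0 rhoP)).
    by rewrite -EFinM lee_fin; lra.
  by rewrite lee_fin.
have nonlinear : ((2 * p)^-1)%:E * (mu1%:E * Lq (2 * p) u + mu2%:E * Lq (2 * p) v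
       + (2 * beta)%:E * \int[leb2]_x (`|u x * v x| `^ p)%:E) <=
    ((2 * p)^-1 * (mu1 * L1 + mu2 * L2 + 2 * beta * (L1 + L2)))%:E.
  rewrite (EFinM ((2 * p)^-1)); apply: lee_wpmul2l.
    by rewrite lee_fin invr_ge0; lra.
  rewrite EFinD (EFinD (mu1 * L1)) !(EFinM mu1, EFinM mu2, EFinM (2 * beta)).
  by rewrite !leeD // lee_wpmul2l // lee_fin mulr_ge0.
by apply: le_trans (leeB (leeD kinetic log_term) nonlinear); rewrite add0e -EFinB.
Qed.

End energy_bound.

(* The bound on c1 + c2 is deliberately unused: boundedness from below on
   A(c1,c2) only needs the energy constraint built into A. *)
Theorem lemma5p1 (R : realType) (mu1 mu2 beta p c1 c2 K : R) :
  0 < mu1 -> 0 < mu2 -> 0 < beta -> 2 < p ->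
  0 < c1 -> 0 < c2 ->
  best_GN_const p K ->
  let mu0 := Num.max (mu1 + beta) (mu2 + beta) in
  c1 + c2 <
     4 `^ ((p - 2) / (2 * p - 3)) *
     (p * (p - 2) `^ (p - 2) / (K * mu0 * (p - 1) `^ p)) `^ (1 / (2 * p - 3)) ->
  (-oo < ereal_inf (I_on_A mu1 mu2 beta p c1 c2))%E.
Proof.
move=> mu1_gt0 mu2_gt0 beta_gt0 p_gt2 _ _ [GN _] mu0 _.
set Qm := (p - 1) / (p - 2) * (c1 + c2) ^+ 2 / 4.
set L1 := `|K| * Qm `^ (p - 1) * c1; set L2 := `|K| * Qm `^ (p - 1) * c2.
apply: (lt_le_trans (ltNyr (- (8 * (c1 + L1 + c2 + L2)) -
  (2 * p)^-1 * (mu1 * L1 + mu2 * L2 + 2 * beta * (L1 + L2))))).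
apply: le_ereal_inf_tmp.
move=> _ [u [gu1 [gu2 [v [gv1 [gv2 [Eu [Ev [uc1 [vc2 [QQm ->]]]]]]]]]]].
have p1 : 1 <= p by lra.
have QuQm : (Qg gu1 gu2 <= Qm%:E)%E.
  by apply: le_trans (ltW QQm); rewrite leeDl ?Qg_ge0.
have QvQm : (Qg gv1 gv2 <= Qm%:E)%E.
  by apply: le_trans (ltW QQm); rewrite leeDr ?Qg_ge0.
apply: Ifun_lower_bound => //; try exact: ltW.
- by case: Eu => [[[]]].
- by case: Ev => [[[]]].
- exact: Lq_le_GN p1 GN Eu.1 uc1 QuQm.
- exact: Lq_le_GN p1 GN Ev.1 vc2 QvQm.
Qed.
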